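(* Let $K$ be a finite simplicial complex, $f$ an injective filtration function on $K$, $n$ a positive integer, and $\alpha$ an $n$-cycle whose class $[\alpha]\in H_n(K^f_a)$ is born at $a$ and terminated at a finite value $b>a$. Let $R_u=\min\{|f(\tau)-b|: \tau \text{ a birth } (n+1)\text{-simplex with } f(\tau)>b\}$ (or $\infty$ if there is no such $\tau$), and $R_l=\min\{|f(\tau)-b|: \tau \text{ a terminal } (n+1)\text{-simplex with } f(\tau)<b\}$ (or $\infty$ if there is no such $\tau$). Then $[\alpha]$ is $\varepsilon$-terminally-rigid for $\varepsilon=\frac12\min\{b-a,R_u,R_l\}$.
   Context: A filtration function on a finite simplicial complex $K$ is a map $f\colon K\to\mathbb{R}$ with $f(\sigma)\le f(\tau)$ whenever $\sigma$ is a face of $\tau$. Sublevel complexes are $K^f_r=f^{-1}((-\infty,r])$; homology is with coefficients in a fixed field. For a nontrivial class $[\alpha]\in H_n(K^f_r)$, its birth is the infimum of $q\le r$ such that $[\alpha]$ is in the image of $H_n(K^f_q)\to H_n(K^f_r)$, and its termination scale is the infimum of $q\ge r$ such that $[\alpha]$ maps to $0$ in $H_n(K^f_q)$. Since $f$ is injective, each simplex $\sigma$ is either a birth simplex (adding it creates a new nontrivial homology class, i.e. $\partial\sigma$ is already a boundary in the complex of simplices with smaller $f$-value) or a terminal simplex (adding it makes a nontrivial homology class trivial). $\|f-g\|_\infty=\max_{\sigma\in K}|f(\sigma)-g(\sigma)|$. For an injective filtration function $g$ with $\|f-g\|_\infty\le\varepsilon$, $\Delta_{g,\alpha}$ is the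 simplex $\tau$ such that $\alpha$ is a boundary in $K^g_{g(\tau)}$ but not in $K^g_r$ for $r<g(\tau)$; $\Sigma_\varepsilon$ is the set of all such $\Delta_{g,\alpha}$ over injective filtration functions $g$ with $\|f-g\|_\infty\le\varepsilon$. The class $[\alpha]$ is $\varepsilon$-terminally-rigid if $|\Sigma_\varepsilon|=1$. *)

From HB Require Import structures.
From mathcomp Require Import all_boot all_order all_algebra.
From mathcomp Require Import boolp reals constructive_ereal.
Set Implicit Arguments. Unset Strict Implicit. Unset Printing Implicit Defensive.
Import Order.TTheory GRing.Theory Num.Theory.
Local Open Scope ring_scope.

(* Abstract simplicial complex on the vertex set 'I_N: a simplex is a nonempty
   finite set of vertices; vertices are ordered by the order of 'I_N, which
   fixes the orientation of each simplex.  A d-simplex has d+1 vertices. *)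
Definition simplicial_complex (N : nat) (K : {set {set 'I_N}}) : Prop :=
  set0 \notin K /\
  forall s t : {set 'I_N}, s \in K -> t \subset s -> t != set0 -> t \in K.

(* Filtration function (only its values on K matter). *)
Definition filtration (R : realType) (N : nat) (K : {set {set 'I_N}})
  (f : {set 'I_N} -> R) : Prop :=
  forall s t, s \in K -> t \in K -> s \subset t -> f s <= f t.

Definition injective_filtration (R : realType) (N : nat) (K : {set {set 'I_N}})
  (f : {set 'I_N} -> R) : Prop :=
  filtration K f /\ {in K &, injective f}.

Definition sublevel (R : realType) (N : nat) (K : {set {set 'I_N}})
  (f : {set 'I_N} -> R) (r : R) : {set {set 'I_N}} :=
  [set s in K | f s <= r].

Definition chain (F : fieldType) (N : nat) := {ffun {set 'I_N} -> F}.

(* Incidence number [s : t]: if t is the facet of s obtained by removing the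
   vertex v, it is (-1)^(position of v in s). *)
Definition incidence (F : fieldType) (N : nat) (s t : {set 'I_N}) : F :=
  if t == set0 then 0 else
  \sum_(v in s | t == s :\ v) (-1) ^+ #|[set w in s | (w < v)%N]|.

Definition bd (F : fieldType) (N : nat) (c : chain F N) : chain F N :=
  [ffun t => \sum_(s : {set 'I_N}) c s * incidence F s t].

Definition is_chain_in (F : fieldType) (N : nat) (L : {set {set 'I_N}})
  (d : nat) (c : chain F N) : Prop :=
  forall s, c s != 0 -> s \in L /\ #|s| = d.+1.

Definition is_cycle_in (F : fieldType) (N : nat) (L : {set {set 'I_N}})
  (d : nat) (c : chain F N) : Prop :=
  is_chain_in L d c /\ bd c = 0.

Definition is_boundary_in (F : fieldType) (N : nat) (L : {set {set 'I_N}})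
  (d : nat) (c : chain F N) : Prop :=
  exists e : chain F N, is_chain_in L d.+1 e /\ bd e = c.

Definition elem (F : fieldType) (N : nat) (s : {set 'I_N}) : chain F N :=
  [ffun t => if t == s then 1 else 0].

Definition birth_simplex (F : fieldType) (R : realType) (N : nat)
  (K : {set {set 'I_N}}) (f : {set 'I_N} -> R) (s : {set 'I_N}) : Prop :=
  is_boundary_in [set t in K | f t < f s] (#|s|.-2) (bd (elem F s)).

Definition terminal_simplex (F : fieldType) (R : realType) (N : nat)
  (K : {set {set 'I_N}}) (f : {set 'I_N} -> R) (s : {set 'I_N}) : Prop :=
  ~ birth_simplex F K f s.

Definition is_inf (R : realType) (P : R -> Prop) (x : R) : Prop :=
  (forall y, P y -> x <= y) /\ (forall z, (forall y, P y -> z <= y) -> z <= x).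

Definition birth_is (F : fieldType) (R : realType) (N : nat)
  (K : {set {set 'I_N}}) (f : {set 'I_N} -> R) (n : nat) (alpha : chain F N)
  (r x : R) : Prop :=
  is_inf (fun q => q <= r /\ exists alpha' : chain F N,
            is_cycle_in (sublevel K f q) n alpha' /\
            is_boundary_in (sublevel K f r) n (alpha - alpha')) x.

Definition termination_is (F : fieldType) (R : realType) (N : nat)
  (K : {set {set 'I_N}}) (f : {set 'I_N} -> R) (n : nat) (alpha : chain F N)
  (r x : R) : Prop :=
  is_inf (fun q => r <= q /\ is_boundary_in (sublevel K f q) n alpha) x.

Definition is_Delta (F : fieldType) (R : realType) (N : nat)
  (K : {set {set 'I_N}}) (g : {set 'I_N} -> R) (n : nat) (alpha : chain F N)
  (tau : {set 'I_N}) : Prop :=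
  tau \in K /\ is_boundary_in (sublevel K g (g tau)) n alpha /\
  forall r, r < g tau -> ~ is_boundary_in (sublevel K g r) n alpha.

(* Sigma_eps, as a predicate on simplices; ||f - g||_oo <= eps is written out as max_{s in K} |f s - g s| <= eps. *)
Definition Sigma_eps (F : fieldType) (R : realType) (N : nat)
  (K : {set {set 'I_N}}) (f : {set 'I_N} -> R) (n : nat) (alpha : chain F N)
  (eps : R) : {set 'I_N} -> Prop :=
  fun tau => exists g : {set 'I_N} -> R,
     injective_filtration K g /\ (forall s, s \in K -> `|f s - g s| <= eps) /\
     is_Delta K g n alpha tau.

(* |Sigma_eps| = 1: Sigma_eps is exactly a singleton {tau0}. *)
Definition terminally_rigid (F : fieldType) (R : realType) (N : nat)
  (K : {set {set 'I_N}}) (f : {set 'I_N} -> R) (n : nat) (alpha : chain F N)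
  (eps : R) : Prop :=
  exists tau0, forall tau, Sigma_eps K f n alpha eps tau <-> tau = tau0.

Definition R_u (F : fieldType) (R : realType) (N : nat)
  (K : {set {set 'I_N}}) (f : {set 'I_N} -> R) (n : nat) (b : R) : \bar R :=
  \big[Order.min/+oo%E]_(t in K | [&& `[< birth_simplex F K f t >],
                                     #|t| == n.+2 & b < f t]) (`|f t - b|%:E).

Definition R_l (F : fieldType) (R : realType) (N : nat)
  (K : {set {set 'I_N}}) (f : {set 'I_N} -> R) (n : nat) (b : R) : \bar R :=
  \big[Order.min/+oo%E]_(t in K | [&& `[< terminal_simplex F K f t >],
                                     #|t| == n.+2 & f t < b]) (`|f t - b|%:E).

From HB Require Import structures.
From mathcomp Require Import all_boot all_order all_algebra.
From mathcomp Require Import boolp reals constructive_ereal.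
From mathcomp Require Import lra.
Set Implicit Arguments. Unset Strict Implicit. Unset Printing Implicit Defensive.
Import Order.TTheory GRing.Theory Num.Theory.
Local Open Scope ring_scope.

(* Let tau be the simplex at whose entry alpha first becomes a boundary under
   f, so that f tau = b.  Under a perturbation g with ||f - g|| <= eps, no
   other simplex can play that role.  An (n+1)-simplex t with f t <= b - 2 eps
   still enters before tau under g; one with b - 2 eps < f t < b is a birth
   simplex because R_l >= 2 eps, so its boundary already bounds earlier
   simplices and, by induction on f, bounds before tau under g.  Hence alpha
   bounds before g tau.  Conversely, if alpha bounded a chain entering before
   tau under g, the f-latest simplex of that chain above b would have f-value
   below b + 2 eps, and it would be a birth simplex (alpha already bounds at
   b), which R_u >= 2 eps forbids. *)

(* Chains form an F-vector space through the regular module F^o. *)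
HB.instance Definition _ (F : fieldType) (N : nat) :=
  GRing.Lmodule.copy (chain F N) {ffun {set 'I_N} -> F^o}.

Section Chains.
Variables (F : fieldType) (N : nat).
Implicit Types (L : {set {set 'I_N}}) (c e : chain F N) (s t : {set 'I_N}).

Fact bd_is_linear : linear (@bd F N).
Proof.
move=> a c c'; apply/ffunP => t; rewrite !ffunE scaler_sumr -big_split /=.
apply: eq_bigr => s _; rewrite !ffunE /= mulrDl.
by congr (_ + _); exact: esym (mulrA _ _ _).
Qed.

HB.instance Definition _ :=
  GRing.isLinear.Build F (chain F N) (chain F N) *:%R (@bd F N) bd_is_linear.

Lemma bdB c c' : bd (c - c') = bd c - bd c'.
Proof. exact: raddfB. Qed.

Lemma bdZ a c : bd (a *: c) = a *: bd c.
Proof. exact: linearZ. Qed.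

Lemma chain_sum_elem c : c = \sum_s c s *: elem F s.
Proof.
apply/ffunP => t; rewrite sum_ffunE (bigD1 t) //= big1 => [|s /negbTE st].
  by rewrite !ffunE eqxx addr0; exact: esym (mulr1 _).
by rewrite !ffunE eq_sym st; exact: mulr0.
Qed.

Lemma bd_sum_elem c : bd c = \sum_s c s *: bd (elem F s).
Proof.
by rewrite {1}[c]chain_sum_elem linear_sum; apply: eq_bigr => s _; rewrite linearZ.
Qed.

Lemma is_chain_in0 L d : is_chain_in L d (0 : chain F N).
Proof. by move=> s; rewrite ffunE eqxx. Qed.

Lemma is_chain_inD L d c c' :
  is_chain_in L d c -> is_chain_in L d c' -> is_chain_in L d (c + c').
Proof.
move=> hc hc' s; rewrite ffunE; have [c0|/hc //] := eqVneq (c s) 0.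
by rewrite c0 add0r => /hc'.
Qed.

Lemma is_chain_inZ L d a c : is_chain_in L d c -> is_chain_in L d (a *: c).
Proof. by move=> hc s; rewrite ffunE mulf_eq0 negb_or => /andP[_ /hc]. Qed.

Lemma is_chain_in_sub L L' d c :
  {subset L <= L'} -> is_chain_in L d c -> is_chain_in L' d c.
Proof. by move=> sLL' hc s /hc [/sLL']. Qed.

Lemma is_boundary_in0 L d : is_boundary_in L d (0 : chain F N).
Proof. by exists 0; rewrite linear0; split => //; exact: is_chain_in0. Qed.

Lemma is_boundary_inD L d c c' :
  is_boundary_in L d c -> is_boundary_in L d c' -> is_boundary_in L d (c + c').
Proof.
move=> [e [he <-]] [e' [he' <-]]; exists (e + e'); rewrite linearD.
by split => //; exact: is_chain_inD.
Qed.

Lemma is_boundary_inZ L d a c : is_boundary_in L d c -> is_boundary_in L d (a *: c).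
Proof.
by move=> [e [he <-]]; exists (a *: e); rewrite linearZ; split => //; exact: is_chain_inZ.
Qed.

Lemma is_boundary_in_sub L L' d c :
  {subset L <= L'} -> is_boundary_in L d c -> is_boundary_in L' d c.
Proof.
by move=> sLL' [e [he <-]]; exists e; split => //; exact: is_chain_in_sub he.
Qed.

Lemma is_boundary_in_elem L d s :
  s \in L -> #|s| = d.+2 -> is_boundary_in L d (bd (elem F s)).
Proof.
move=> sL card_s; exists (elem F s); split => // t; rewrite ffunE.
by have [->|_] := eqVneq t s; rewrite ?eqxx.
Qed.

Lemma is_boundary_in_bd L d e :
  (forall s, e s != 0 -> is_boundary_in L d (bd (elem F s))) ->
  is_boundary_in L d (bd e).
Proof.
move=> bd_supp; rewrite bd_sum_elem; apply: big_ind => //.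
- exact: is_boundary_in0.
- exact: is_boundary_inD.
move=> s _; have [->|/bd_supp] := eqVneq (e s) 0; last exact: is_boundary_inZ.
by rewrite scale0r; exact: is_boundary_in0.
Qed.

End Chains.

Definition strict_sublevel (R : realType) (N : nat) (K : {set {set 'I_N}})
  (f : {set 'I_N} -> R) (r : R) : {set {set 'I_N}} :=
  [set s in K | f s < r].

Section Filtrations.
Variables (F : fieldType) (R : realType) (N : nat) (K : {set {set 'I_N}}).
Implicit Types (f g : {set 'I_N} -> R) (L : {set {set 'I_N}}).
Implicit Types (alpha c e : chain F N).

Lemma sublevel_sub f r : {subset sublevel K f r <= K}.
Proof. by move=> s; rewrite inE => /andP[]. Qed.

Lemma strict_sublevel_sub f r : {subset strict_sublevel K f r <= K}.
Proof. by move=> s; rewrite inE => /andP[]. Qed.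

Lemma strict_sublevel_proper f s t : s \in K -> f s < f t ->
  strict_sublevel K f (f s) \proper strict_sublevel K f (f t).
Proof.
move=> sK lt_st; apply/properP; split.
  by apply/subsetP => u; rewrite !inE => /andP[-> /lt_trans]; apply.
by exists s; rewrite !inE ?sK ?lt_st ?ltxx.
Qed.

Lemma exists_boundary_at_simplex f L d c :
  {subset L <= K} -> c != 0 -> is_boundary_in L d c ->
  exists2 s, s \in L & is_boundary_in (sublevel K f (f s)) d c.
Proof.
move=> sLK c_neq0 [e [e_in bd_e]].
have [s0 es0] : exists s, e s != 0.
  apply/existsP; apply: contraNT c_neq0 => /existsPn e0.
  rewrite -bd_e (_ : e = 0) ?linear0 //.
  by apply/ffunP => s; rewrite ffunE; apply/eqP/negbNE.
have [s es s_max] := @arg_maxP _ _ _ s0 (fun s => e s != 0) f es0.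
have [sL _] := e_in s es.
exists s => //; exists e; split => // t et; have [tL card_t] := e_in t et.
by rewrite inE sLK //=; split => //; exact: s_max.
Qed.

Lemma birth_simplex_top f d e e0 tau x :
  {in K &, injective f} -> is_chain_in K d.+1 e ->
  is_chain_in (sublevel K f x) d.+1 e0 -> bd e = bd e0 ->
  e tau != 0 -> x < f tau -> (forall s, e s != 0 -> f s <= f tau) ->
  birth_simplex F K f tau.
Proof.
move=> finj e_in e0_in bd_ee0 e_tau lt_tau tau_max.
have [tauK card_tau] := e_in tau e_tau.
rewrite /birth_simplex card_tau /=.
(* As bd e = bd e0, the boundary of tau is that of the chain below, whose
   support lies strictly below tau by maximality of tau and injectivity. *)
pose rest := e - e tau *: elem F tau.
exists ((e tau)^-1 *: (e0 - rest)); split; last first.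
  by rewrite bdZ bdB /rest bdB bdZ bd_ee0 opprB addrC subrK scalerA mulVf ?scale1r.
have sub_x : {subset sublevel K f x <= strict_sublevel K f (f tau)}.
  by move=> s; rewrite !inE => /andP[-> /le_lt_trans]; apply.
apply/is_chain_inZ/is_chain_inD; first exact: is_chain_in_sub e0_in.
rewrite -scaleN1r; apply: is_chain_inZ => t; rewrite !ffunE.
have [-> | t_tau] := eqVneq t tau; first by rewrite [_ *: _]mulr1 subrr eqxx.
rewrite [_ *: _]mulr0 subr0 => /[dup] /e_in [tK card_t] /tau_max le_t.
rewrite inE tK lt_neqAle le_t andbT; split => //.
by apply: contra_neq t_tau => /finj ->.
Qed.

Lemma is_Delta_unique g n alpha t1 t2 : {in K &, injective g} ->
  is_Delta K g n alpha t1 -> is_Delta K g n alpha t2 -> t1 = t2.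
Proof.
move=> ginj [t1K [bd_t1 below_t1]] [t2K [bd_t2 below_t2]].
case: (ltgtP (g t1) (g t2)) => [lt12|lt21|]; last exact: ginj.
- by case: (below_t2 _ lt12 bd_t1).
- by case: (below_t1 _ lt21 bd_t2).
Qed.

Lemma is_Delta_neq0 g n alpha tau : is_Delta K g n alpha tau -> alpha != 0.
Proof.
case=> _ [_ below]; apply/eqP => alpha0.
apply: (below (g tau - 1)); first by rewrite gtrDl ltrN10.
by rewrite alpha0; exact: is_boundary_in0.
Qed.

Lemma is_Delta_strict g n alpha tau : is_Delta K g n alpha tau ->
  ~ is_boundary_in (strict_sublevel K g (g tau)) n alpha.
Proof.
move=> Delta_tau bd_below; have [_ [_ below]] := Delta_tau.
have [s] := exists_boundary_at_simplex g (@strict_sublevel_sub g _)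
  (is_Delta_neq0 Delta_tau) bd_below.
by rewrite inE => /andP[_]; exact: below.
Qed.

Lemma exists_is_Delta f n alpha r : alpha != 0 ->
  is_boundary_in (sublevel K f r) n alpha -> exists tau, is_Delta K f n alpha tau.
Proof.
move=> alpha_neq0 bd_r.
pose D s := (s \in K) && `[< is_boundary_in (sublevel K f (f s)) n alpha >].
have [s0 /sublevel_sub s0K bd_s0] :=
  exists_boundary_at_simplex f (@sublevel_sub f r) alpha_neq0 bd_r.
have D_s0 : D s0 by rewrite /D s0K; apply/asboolP.
have [tau /andP[tauK /asboolP bd_tau] tau_min] := arg_minP f D_s0.
exists tau; split => //; split => // q lt_q bd_q.
have [s /[dup] /sublevel_sub sK] :=
  exists_boundary_at_simplex f (@sublevel_sub f q) alpha_neq0 bd_q.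
rewrite inE => /andP[_ le_s] /asboolP bd_s.
have := tau_min s; rewrite /D sK bd_s => /(_ isT) le_tau_s.
by have := le_trans le_tau_s le_s; rewrite leNgt lt_q.
Qed.

End Filtrations.

Lemma is_inf_min (R : realType) (P : R -> Prop) x y :
  is_inf P x -> P y -> (forall z, P z -> y <= z) -> x = y.
Proof. by move=> [lb glb] Py y_min; apply/le_anti; rewrite lb // glb. Qed.

Lemma is_inf_ex (R : realType) (P : R -> Prop) x : is_inf P x -> exists y, P y.
Proof.
case=> _ glb; apply: contrapT => noP.
have := glb (x + 1) (fun y Py => False_ind _ (noP (ex_intro _ y Py))); lra.
Qed.

Lemma is_Delta_termination (F : fieldType) (R : realType) (N : nat)
  (K : {set {set 'I_N}}) (f : {set 'I_N} -> R) (n : nat) (alpha : chain F N)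
  (a b : R) (tau : {set 'I_N}) :
  is_Delta K f n alpha tau -> ~ is_boundary_in (sublevel K f a) n alpha ->
  termination_is K f n alpha a b -> b = f tau.
Proof.
move=> [tauK [bd_tau below]] not_bd_a /is_inf_min; apply.
  split => //; rewrite leNgt; apply/negP => lt_tau; apply: not_bd_a.
  apply: is_boundary_in_sub bd_tau => s; rewrite !inE => /andP[-> le_s].
  exact: le_trans le_s (ltW lt_tau).
by move=> q [_ bd_q]; rewrite leNgt; apply/negP => lt_q; exact: below lt_q bd_q.
Qed.

Section DeltaStability.
Variables (F : fieldType) (R : realType) (N : nat) (K : {set {set 'I_N}}).
Variables (f g : {set 'I_N} -> R) (n : nat) (alpha : chain F N).
Variables (tb : {set 'I_N}) (eps : R).
Hypothesis finj : {in K &, injective f}.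
Hypothesis ginj : {in K &, injective g}.
Hypothesis close_fg : forall s, s \in K -> `|f s - g s| <= eps.
Hypothesis Delta_f : is_Delta K f n alpha tb.
Hypothesis gap_above : forall t, t \in K -> birth_simplex F K f t ->
  #|t| = n.+2 -> f tb < f t -> 2 * eps <= f t - f tb.
Hypothesis gap_below : forall t, t \in K -> terminal_simplex F K f t ->
  #|t| = n.+2 -> f t < f tb -> 2 * eps <= f tb - f t.

Let tbK : tb \in K. Proof. by case: Delta_f. Qed.

Let g_le_f s : s \in K -> g s <= f s + eps.
Proof. by move/close_fg; rewrite ler_norml => /andP[]; lra. Qed.

Let f_le_g s : s \in K -> f s <= g s + eps.
Proof. by move/close_fg; rewrite ler_norml => /andP[]; lra. Qed.

Lemma bd_elem_boundary_below t : t \in K -> #|t| = n.+2 -> f t < f tb ->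
  is_boundary_in (strict_sublevel K g (g tb)) n (bd (elem F t)).
Proof.
have [k] := ubnP #|strict_sublevel K f (f t)|.
elim: k t => // k IH t size_t tK card_t lt_t.
have [far|near] := lerP (f t) (f tb - 2 * eps).
  have g_neq : g t != g tb by apply: contraTneq lt_t => /(ginj tK tbK) ->; rewrite ltxx.
  apply: is_boundary_in_elem card_t; rewrite inE tK lt_neqAle g_neq /=.
  by have := g_le_f tK; have := f_le_g tbK; lra.
have birth_t : birth_simplex F K f t.
  by apply: contrapT => term_t; have := gap_below tK term_t card_t lt_t; lra.
move: birth_t; rewrite /birth_simplex card_t => -[e [e_in <-]].
apply: is_boundary_in_bd => s /e_in []; rewrite inE => /andP[sK lt_s] card_s.
apply: IH => //; last exact: lt_trans lt_t.
rewrite ltnS in size_t.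
exact: leq_trans (proper_card (strict_sublevel_proper sK lt_s)) size_t.
Qed.

Lemma not_boundary_below : ~ is_boundary_in (strict_sublevel K g (g tb)) n alpha.
Proof.
case=> e [e_in bd_e]; have [_ [[e0 [e0_in bd_e0]] _]] := Delta_f.
have [/existsP [s0 hs0] | /existsPn below_tb] :=
  boolP [exists s, (e s != 0) && (f tb < f s)].
  have [tau /andP[e_tau lt_tau] tau_max] :=
    @arg_maxP _ _ _ s0 (fun s => (e s != 0) && (f tb < f s)) f hs0.
  have [+ card_tau] := e_in tau e_tau; rewrite inE => /andP[tauK lt_g].
  have e_inK := is_chain_in_sub (@strict_sublevel_sub _ _ K g _) e_in.
  have birth_tau : birth_simplex F K f tau.
    apply: (birth_simplex_top finj e_inK e0_in _ e_tau lt_tau) => [|s es].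
      by rewrite bd_e bd_e0.
    have [lt_s|le_s] := ltP (f tb) (f s); first by apply: tau_max; rewrite es.
    exact: le_trans le_s (ltW lt_tau).
  have := gap_above tauK birth_tau card_tau lt_tau.
  by have := f_le_g tauK; have := g_le_f tbK; lra.
apply: (is_Delta_strict Delta_f); exists e; split => // s es.
have [+ card_s] := e_in s es; rewrite !inE => /andP[sK lt_g]; split => //.
rewrite sK /= lt_neqAle; have := below_tb s; rewrite es /= -leNgt => ->.
by rewrite andbT; apply: contraTneq lt_g => /(finj sK tbK) ->; rewrite ltxx.
Qed.

Lemma is_Delta_stable : is_Delta K g n alpha tb.
Proof.
have [_ [bd_tb _]] := Delta_f.
split=> //; split => [|r lt_r bd_r]; last first.
  apply: not_boundary_below; apply: is_boundary_in_sub bd_r => s.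
  by rewrite !inE => /andP[-> /le_lt_trans]; apply.
have [e0 [e0_in <-]] := bd_tb.
apply: is_boundary_in_bd => s /e0_in []; rewrite inE => /andP[sK le_s] card_s.
have [<- | s_tb] := eqVneq s tb.
  by apply: is_boundary_in_elem _ card_s; rewrite inE sK lexx.
apply: is_boundary_in_sub (bd_elem_boundary_below sK card_s _) => [u|].
  by rewrite !inE => /andP[-> /ltW].
by rewrite lt_neqAle le_s andbT; apply: contra_neq s_tb => /(finj sK tbK).
Qed.

End DeltaStability.

Section RigidityRadius.
Variables (F : fieldType) (R : realType) (N : nat) (K : {set {set 'I_N}}).
Variables (f : {set 'I_N} -> R) (n : nat) (b : R).
Local Open Scope ereal_scope.

Lemma R_u_ge0 : 0 <= R_u F K f n b.
Proof. by apply: le_bigmin => [|t _]; rewrite ?leey ?lee_fin. Qed.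

Lemma R_l_ge0 : 0 <= R_l F K f n b.
Proof. by apply: le_bigmin => [|t _]; rewrite ?leey ?lee_fin. Qed.

Lemma R_u_le t : t \in K -> birth_simplex F K f t -> #|t| = n.+2 ->
  (b < f t)%R -> R_u F K f n b <= (f t - b)%:E.
Proof.
move=> tK birth_t card_t lt_t; apply: (bigmin_inf t) => /=.
  by rewrite tK card_t eqxx lt_t asboolT.
by rewrite lee_fin gtr0_norm ?subr_gt0.
Qed.

Lemma R_l_le t : t \in K -> terminal_simplex F K f t -> #|t| = n.+2 ->
  (f t < b)%R -> R_l F K f n b <= (b - f t)%:E.
Proof.
move=> tK term_t card_t lt_t; apply: (bigmin_inf t) => /=.
  by rewrite tK card_t eqxx lt_t asboolT.
by rewrite lee_fin ltr0_norm ?subr_lt0 ?opprB.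
Qed.

End RigidityRadius.

Lemma fine_min_le (R : realType) (c x : R) (w : \bar R) :
  0 <= c -> (0 <= w)%E -> (w <= x%:E)%E -> fine (Order.min c%:E w) <= x.
Proof.
move=> c_ge0 w_ge0 le_wx.
have min_ge0 : (0 <= Order.min c%:E w)%E by rewrite le_min lee_fin c_ge0 w_ge0.
have min_le_c : (Order.min c%:E w <= c%:E)%E by rewrite ge_min lexx.
rewrite -lee_fin fineK; first by rewrite ge_min le_wx orbT.
by rewrite ge0_fin_numE // (le_lt_trans min_le_c) ?ltry.
Qed.

Theorem theorem3p6 (F : fieldType) (R : realType) (N : nat)
  (K : {set {set 'I_N}}) (f : {set 'I_N} -> R) (n : nat)
  (alpha : chain F N) (a b : R) :
  simplicial_complex K ->
  injective_filtration K f ->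
  (0 < n)%N ->
  is_cycle_in (sublevel K f a) n alpha ->
  ~ is_boundary_in (sublevel K f a) n alpha ->
  birth_is K f n alpha a a ->
  termination_is K f n alpha a b ->
  a < b ->
  terminally_rigid K f n alpha
    (fine (Order.min ((b - a)%:E) (Order.min (R_u F K f n b) (R_l F K f n b))) / 2).
Proof.
move=> _ f_filt _ _ not_bd_a _ term_b lt_ab.
have finj := f_filt.2.
have alpha_neq0 : alpha != 0.
  by apply/eqP => alpha0; apply: not_bd_a; rewrite alpha0; exact: is_boundary_in0.
have [q [_ bd_q]] := is_inf_ex term_b.
have [tb Delta_tb] := exists_is_Delta alpha_neq0 bd_q.
have b_tb := is_Delta_termination Delta_tb not_bd_a term_b.
set m := fine _.
have ba_ge0 : 0 <= b - a by rewrite subr_ge0 ltW.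
have Ru_Rl_ge0 : (0 <= Order.min (R_u F K f n b) (R_l F K f n b))%E.
  by rewrite le_min R_u_ge0 R_l_ge0.
have m_ge0 : 0 <= m by apply: fine_ge0; rewrite le_min lee_fin ba_ge0.
have gap_above t : t \in K -> birth_simplex F K f t -> #|t| = n.+2 ->
    f tb < f t -> 2 * (m / 2) <= f t - f tb.
  move=> tK birth_t card_t; rewrite -b_tb => lt_t.
  suff : m <= f t - b by lra.
  by apply: fine_min_le ba_ge0 Ru_Rl_ge0 _; rewrite ge_min R_u_le.
have gap_below t : t \in K -> terminal_simplex F K f t -> #|t| = n.+2 ->
    f t < f tb -> 2 * (m / 2) <= f tb - f t.
  move=> tK term_t card_t; rewrite -b_tb => lt_t.
  suff : m <= b - f t by lra.
  by apply: fine_min_le ba_ge0 Ru_Rl_ge0 _; rewrite ge_min R_l_le ?orbT.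
exists tb => tau; split.
  case=> g [[_ ginj] [close_fg Delta_g]].
  exact: is_Delta_unique ginj Delta_g
    (is_Delta_stable finj ginj close_fg Delta_tb gap_above gap_below).
by move=> ->; exists f; split => //; split => // s _; rewrite subrr normr0 divr_ge0.
Qed.
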